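(* For every integer $N\geq 0$ the following identities hold in $\mathcal{A}(S^5_q)$: $$\sum_{j+k+l=N}[j,k,l]!\,(z_1^jz_2^kz_3^l)(z_1^jz_2^kz_3^l)^*=1,\qquad \sum_{j+k+l=N}q^{2(j-l)}[j,k,l]!\,(z_1^jz_2^kz_3^l)^*(z_1^jz_2^kz_3^l)=q^{-2N},$$ where the sums run over all triples $(j,k,l)$ of non-negative integers with $j+k+l=N$.
   Context: Fix $0<q<1$. $\mathcal{A}(S^5_q)$ is the unital $*$-algebra generated by $z_1,z_2,z_3$ and their adjoints with relations: $z_iz_j=qz_jz_i$ for $i<j$; $z_i^*z_j=qz_jz_i^*$ for $i\neq j$; $[z_1^*,z_1]=0$; $[z_2^*,z_2]=(1-q^2)z_1z_1^*$; $[z_3^*,z_3]=(1-q^2)(z_1z_1^*+z_2z_2^* )$; $z_1z_1^*+z_2z_2^*+z_3z_3^*=1$. For $x\in\mathbb{C}$, $[x]:=\frac{q^x-q^{-x}}{q-q^{-1}}$; for $n\in\mathbb{N}$, $[n]!:=[n][n-1]\cdots[1]$, $[0]!:=1$. The $q$-trinomial coefficient is $[j,k,l]!:=q^{-(jk+kl+lj)}\frac{[j+k+l]!}{[j]![k]![l]!}$. *)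

From HB Require Import structures.
From mathcomp Require Import all_boot all_order all_algebra.
Set Implicit Arguments. Unset Strict Implicit. Unset Printing Implicit Defensive.
Import Order.TTheory GRing.Theory Num.Theory.
Local Open Scope ring_scope.

Definition qnum {K : fieldType} (q : K) (n : nat) : K :=
  (q ^+ n - q ^- n) / (q - q^-1).

Definition qfact {K : fieldType} (q : K) (n : nat) : K :=
  \prod_(i < n) qnum q i.+1.

Definition qtrinom {K : fieldType} (q : K) (j k l : nat) : K :=
  q ^- (j * k + k * l + l * j)%N * qfact q (j + k + l)
  / (qfact q j * qfact q k * qfact q l).

Definition is_star {K : numClosedFieldType} {A : algType K} (star : A -> A) : Prop :=
  [/\ forall a b : A, star (a + b) = star a + star b,
      forall (c : K) (a : A), star (c *: a) = Num.conj c *: star a,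
      forall a b : A, star (a * b) = star b * star a,
      forall a : A, star (star a) = a
    & star 1 = 1].

Definition S5q_relations {K : numClosedFieldType} {A : algType K}
    (q : K) (star : A -> A) (z1 z2 z3 : A) : Prop :=
  [/\
      [/\ z1 * z2 = q *: (z2 * z1), z1 * z3 = q *: (z3 * z1)
        & z2 * z3 = q *: (z3 * z2)],
      [/\ star z1 * z2 = q *: (z2 * star z1), star z1 * z3 = q *: (z3 * star z1),
          star z2 * z1 = q *: (z1 * star z2) & star z2 * z3 = q *: (z3 * star z2)],
      [/\ star z3 * z1 = q *: (z1 * star z3) & star z3 * z2 = q *: (z2 * star z3)],
      [/\ star z1 * z1 - z1 * star z1 = 0,
          star z2 * z2 - z2 * star z2 = (1 - q ^+ 2) *: (z1 * star z1)
        & star z3 * z3 - z3 * star z3 = (1 - q ^+ 2) *: (z1 * star z1 + z2 * star z2)]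
    & z1 * star z1 + z2 * star z2 + z3 * star z3 = 1].

Definition mono {K : numClosedFieldType} {A : algType K} (z1 z2 z3 : A) (j k l : nat) : A :=
  z1 ^+ j * z2 ^+ k * z3 ^+ l.

(* Write P(j,k,l) = m m^* and Q(j,k,l) = m^* m for the monomial m = z1^j z2^k z3^l,
   and consider the "sandwich" maps
     Phi x = z1 x z1^* + z2 x z2^* + z3 x z3^*,
     Psi x = q^2 z1^* x z1 + z2^* x z2 + q^-2 z3^* x z3.
   Both are linear, Phi 1 = 1 and (by the commutation relations) Psi 1 = q^-2 1.
   The q-commutation relations show that Phi P(j,k,l) is a combination of
   P(j+1,k,l), P(j,k+1,l), P(j,k,l+1), and similarly for Psi and Q.  Summing over
   j+k+l = N and re-indexing, the q-Pascal rule for the q-trinomial coefficients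
   (a consequence of [m+n] = q^n [m] + q^-m [n]) shows that Phi maps the N-th sum
   of the first identity to the (N+1)-th one, and likewise Psi for the second. *)

From HB Require Import structures.
From mathcomp Require Import all_boot all_order all_algebra.
From mathcomp Require Import zify ring.
Set Implicit Arguments. Unset Strict Implicit. Unset Printing Implicit Defensive.
Import Order.TTheory GRing.Theory Num.Theory.
Local Open Scope ring_scope.

Lemma qnum0 (K : fieldType) (q : K) : qnum q 0 = 0.
Proof. by rewrite /qnum expr0 invr1 subrr mul0r. Qed.

Lemma qnumD (K : fieldType) (q : K) (m n : nat) : q != 0 ->
  qnum q (m + n) = q ^+ n * qnum q m + q ^- m * qnum q n.
Proof.
move=> q0; rewrite /qnum !mulrA -mulrDl exprD; congr (_ * _).
by field; rewrite !expf_neq0.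
Qed.

Lemma qfactS (K : fieldType) (q : K) (n : nat) : qfact q n.+1 = qfact q n * qnum q n.+1.
Proof. by rewrite /qfact big_ord_recr. Qed.

(* [j,k,l]! is symmetric in its arguments; swapping the first two and reversing
   generate all symmetries needed. *)
Lemma qtrinom_swap (K : fieldType) (q : K) (a b c : nat) :
  qtrinom q a b c = qtrinom q b a c.
Proof.
rewrite /qtrinom (addnC b a) (mulrC (qfact q b)).
by have -> : (b * a + a * c + c * b = a * b + b * c + c * a)%N by lia.
Qed.

Lemma qtrinom_rev (K : fieldType) (q : K) (a b c : nat) :
  qtrinom q a b c = qtrinom q c b a.
Proof.
rewrite /qtrinom; have -> : (c + b + a = a + b + c)%N by lia.
have -> : (c * b + b * a + a * c = a * b + b * c + c * a)%N by lia.
by congr (_ / _); ring.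
Qed.

Lemma qtrinom000 (K : fieldType) (q : K) : qtrinom q 0 0 0 = 1.
Proof. by rewrite /qtrinom /qfact big_ord0 expr0 invr1 !mul1r invr1. Qed.

Section QNumbers.
Variables (K : numFieldType) (q : K).
Hypotheses (q_gt0 : 0 < q) (q_neq1 : q != 1).

Lemma q_neq0 : q != 0. Proof. by rewrite gt_eqF. Qed.

Lemma qnum_neq0 n : (0 < n)%N -> qnum q n != 0.
Proof.
have qdiff k : (0 < k)%N -> q ^+ k - q ^- k != 0.
  move=> k_gt0; rewrite subr_eq0; apply: contraNneq q_neq1 => qkV.
  rewrite -(@pexpr_eq1 _ q (k + k)) ?addn_gt0 ?k_gt0 ?ltW //.
  by rewrite exprD {1}qkV mulVf // expf_neq0 // q_neq0.
have qdiff1 : q - q^-1 != 0 by have := qdiff 1%N isT; rewrite expr1.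
by move=> n_gt0; rewrite mulf_neq0 ?invr_neq0 ?qdiff.
Qed.

Lemma qfact_neq0 n : qfact q n != 0.
Proof. by apply/prodf_neq0 => i _; apply: qnum_neq0. Qed.

(* Lowering one index of [j,k,l]! multiplies it by a ratio of q-numbers;
   the factor (0 < a) encodes the convention that a negative index gives 0. *)
Lemma qtrinom_stepA a b c :
  (qtrinom q a.-1 b c *+ (0 < a)) * qnum q (a + b + c)
  = qtrinom q a b c * q ^+ (b + c) * qnum q a.
Proof.
case: a => [|a]; first by rewrite mul0r qnum0 mulr0.
rewrite /qtrinom /= mulr1n !addSn !qfactS.
have -> : (a.+1 * b + b * c + c * a.+1 = (a * b + b * c + c * a) + (b + c))%N by lia.
rewrite [q ^+ (_ + (b + c))]exprD invfM.
by field; rewrite !expf_neq0 ?qfact_neq0 ?qnum_neq0 ?q_neq0.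
Qed.

Lemma qtrinom_stepB a b c :
  (qtrinom q a b.-1 c *+ (0 < b)) * qnum q (a + b + c)
  = qtrinom q a b c * q ^+ (a + c) * qnum q b.
Proof.
rewrite (qtrinom_swap q a b.-1) (qtrinom_swap q a b) (addnC a b).
exact: qtrinom_stepA.
Qed.

Lemma qtrinom_stepC a b c :
  (qtrinom q a b c.-1 *+ (0 < c)) * qnum q (a + b + c)
  = qtrinom q a b c * q ^+ (a + b) * qnum q c.
Proof.
rewrite (qtrinom_rev q a b c.-1) (qtrinom_rev q a b c) (addnC a b).
have -> : (b + a + c = c + b + a)%N by lia.
by rewrite qtrinom_stepA.
Qed.

(* q-Pascal rule: [a,b,c]! is the weighted sum of the three coefficients with
   one index lowered; proved by clearing [a+b+c] and using qnumD twice. *)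
Lemma qtrinom_pascal a b c : (0 < a + b + c)%N ->
  qtrinom q a.-1 b c *+ (0 < a)
  + q ^- (2 * a) * (qtrinom q a b.-1 c *+ (0 < b))
  + q ^- (2 * (a + b)) * (qtrinom q a b c.-1 *+ (0 < c))
  = qtrinom q a b c.
Proof.
move=> n_gt0; apply: (mulIf (qnum_neq0 n_gt0)).
rewrite !mulrDl -![q ^- _ * _ * qnum _ _]mulrA qtrinom_stepA qtrinom_stepB qtrinom_stepC.
rewrite (qnumD _ _ q_neq0) (qnumD a b q_neq0).
set T := qtrinom q a b c; rewrite !(mulnC 2) !exprM !(exprD q).
by field; rewrite !expf_neq0 ?q_neq0.
Qed.

Lemma qtrinom_pascal_rev a b c : (0 < a + b + c)%N ->
  q ^- (2 * (b + c)) * (qtrinom q a.-1 b c *+ (0 < a))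
  + q ^- (2 * c) * (qtrinom q a b.-1 c *+ (0 < b))
  + qtrinom q a b c.-1 *+ (0 < c)
  = qtrinom q a b c.
Proof.
move=> n_gt0; rewrite (qtrinom_rev q a.-1) !(qtrinom_rev q a).
rewrite -(@qtrinom_pascal c b a); last by lia.
by rewrite (addnC c b); ring.
Qed.

(* The two recurrences in the shape required by tsum_transfer, with the
   coefficients produced by Phi and by Psi respectively. *)
Lemma qtrinom_weights_left a b c : (0 < a + b + c)%N ->
  (qtrinom q a.-1 b c * 1) *+ (0 < a)
  + (qtrinom q a b.-1 c * q ^- (2 * a)) *+ (0 < b)
  + (qtrinom q a b c.-1 * q ^- (2 * (a + b))) *+ (0 < c)
  = qtrinom q a b c.
Proof.
by move=> n_gt0; rewrite -(qtrinom_pascal n_gt0); congr (_ + _ + _); ring.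
Qed.

Lemma qtrinom_weights_right a b c : (0 < a + b + c)%N ->
  (q ^+ (2 * a.-1) * q ^- (2 * c) * qtrinom q a.-1 b c * (q ^+ 2 * q ^- (2 * (b + c))))
    *+ (0 < a)
  + (q ^+ (2 * a) * q ^- (2 * c) * qtrinom q a b.-1 c * q ^- (2 * c)) *+ (0 < b)
  + (q ^+ (2 * a) * q ^- (2 * c.-1) * qtrinom q a b c.-1 * q ^- 2) *+ (0 < c)
  = q ^+ (2 * a) * q ^- (2 * c) * qtrinom q a b c.
Proof.
move=> n_gt0; rewrite -(qtrinom_pascal_rev n_gt0) !mulrDr; congr (_ + _ + _).
- case: a {n_gt0} => [|a] /=; first by rewrite !mulr0n !mulr0.
  by rewrite !mulr1n mulnS exprD; field; rewrite !expf_neq0 ?q_neq0.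
- by rewrite !mulrnAr; congr (_ *+ _); field; rewrite !expf_neq0 ?q_neq0.
- case: c {n_gt0} => [|c] /=; first by rewrite !mulr0n !mulr0.
  by rewrite !mulr1n mulnS exprD; field; rewrite !expf_neq0 ?q_neq0.
Qed.
End QNumbers.

Section TrinomialSums.
Variable V : zmodType.
Implicit Types (N : nat) (F G : nat -> nat -> nat -> V).

Definition tsum N F : V :=
  \sum_(j < N.+1) \sum_(k < N.+1) \sum_(l < N.+1 | (j + k + l == N)%N) F j k l.

Lemma tsum_box N F : tsum N F =
  \sum_(j < N.+1) \sum_(k < N.+1) \sum_(l < N.+1) F j k l *+ (j + k + l == N)%N.
Proof.
apply: eq_bigr => j _; apply: eq_bigr => k _; rewrite big_mkcond.
by apply: eq_bigr => l _; case: (_ == _); rewrite ?mulr1n ?mulr0n.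
Qed.

Lemma tsum0 F : tsum 0 F = F 0%N 0%N 0%N.
Proof. by rewrite tsum_box !big_ord1 /= mulr1n. Qed.

Lemma eq_tsum N F G : (forall a b c, (a + b + c)%N = N -> F a b c = G a b c) ->
  tsum N F = tsum N G.
Proof.
move=> FG; apply: eq_bigr => j _; apply: eq_bigr => k _.
by apply: eq_bigr => l /eqP; apply: FG.
Qed.

Lemma tsumD N F G : tsum N (fun a b c => F a b c + G a b c) = tsum N F + tsum N G.
Proof.
rewrite /tsum -big_split; apply: eq_bigr => j _.
by rewrite -big_split; apply: eq_bigr => k _; rewrite -big_split.
Qed.

Lemma tsum_swap12 N F : tsum N F = tsum N (fun a b c => F b a c).
Proof.
rewrite !tsum_box exchange_big; apply: eq_bigr => j _; apply: eq_bigr => k _.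
by apply: eq_bigr => l _; rewrite (addnC j k).
Qed.

Lemma tsum_swap23 N F : tsum N F = tsum N (fun a b c => F a c b).
Proof.
rewrite !tsum_box; apply: eq_bigr => j _; rewrite exchange_big.
by apply: eq_bigr => k _; apply: eq_bigr => l _; rewrite addnAC.
Qed.

Lemma tsum_shiftA N G :
  tsum N.+1 (fun a b c => G a b c *+ (0 < a)%N) = tsum N (fun a b c => G a.+1 b c).
Proof.
rewrite !tsum_box big_ord_recl big1 ?add0r => [|k _]; last first.
  by apply: big1 => l _; rewrite mulr0n mul0rn.
apply: eq_bigr => j _; rewrite lift0 big_ord_recr /= [X in _ + X]big1 ?addr0.
  apply: eq_bigr => k _; rewrite big_ord_recr /=.
  have -> : (j.+1 + k + N.+1 == N.+1)%N = false by lia.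
  by rewrite mulr0n addr0; apply: eq_bigr => l _; rewrite mulr1n !addSn eqSS.
move=> l _; have -> : (j.+1 + N.+1 + l == N.+1)%N = false by lia.
by rewrite mulr0n.
Qed.

Lemma tsum_shiftB N G :
  tsum N.+1 (fun a b c => G a b c *+ (0 < b)%N) = tsum N (fun a b c => G a b.+1 c).
Proof. by rewrite tsum_swap12 tsum_shiftA [RHS]tsum_swap12. Qed.

Lemma tsum_shiftC N G :
  tsum N.+1 (fun a b c => G a b c *+ (0 < c)%N) = tsum N (fun a b c => G a b c.+1).
Proof. by rewrite tsum_swap23 tsum_shiftB [RHS]tsum_swap23. Qed.

End TrinomialSums.

Lemma tsum_morph (V W : zmodType) (f : V -> W) N (F : nat -> nat -> nat -> V) :
  {morph f : x y / x + y} -> f 0 = 0 -> f (tsum N F) = tsum N (fun a b c => f (F a b c)).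
Proof.
move=> fD f0; rewrite /tsum (big_morph f fD f0); apply: eq_bigr => j _.
by rewrite (big_morph f fD f0); apply: eq_bigr => k _; apply: big_morph.
Qed.

Section Transfer.
Variables (R : pzRingType) (V : lmodType R) (Phi : V -> V).
Hypotheses (Phi_add : {morph Phi : x y / x + y})
           (Phi_scale : forall c x, Phi (c *: x) = c *: Phi x).
Variables (P : nat -> nat -> nat -> V) (alpha beta gamma w : nat -> nat -> nat -> R).
Hypothesis Phi_P : forall a b c,
  Phi (P a b c) = alpha a b c *: P a.+1 b c + beta a b c *: P a b.+1 c
                  + gamma a b c *: P a b c.+1.
Hypothesis w_rec : forall a b c, (0 < a + b + c)%N ->
  (w a.-1 b c * alpha a.-1 b c) *+ (0 < a)%N + (w a b.-1 c * beta a b.-1 c) *+ (0 < b)%N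
  + (w a b c.-1 * gamma a b c.-1) *+ (0 < c)%N = w a b c.

Lemma tsum_transfer N :
  Phi (tsum N (fun a b c => w a b c *: P a b c))
  = tsum N.+1 (fun a b c => w a b c *: P a b c).
Proof.
have Phi0 : Phi 0 = 0 by rewrite -(scale0r (0 : V)) Phi_scale !scale0r.
rewrite tsum_morph //.
under eq_tsum => a b c _ do rewrite Phi_scale Phi_P !scalerDr !scalerA.
rewrite !tsumD -(tsum_shiftA _ (fun a b c => (w a.-1 b c * alpha a.-1 b c) *: P a b c)).
rewrite -(tsum_shiftB _ (fun a b c => (w a b.-1 c * beta a b.-1 c) *: P a b c)).
rewrite -(tsum_shiftC _ (fun a b c => (w a b c.-1 * gamma a b c.-1) *: P a b c)).
rewrite -!tsumD; apply: eq_tsum => a b c abc.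
by rewrite !scalerMnl -!scalerDl w_rec // abc.
Qed.

Lemma tsum_eigen (e : V) (s : R) : Phi e = s *: e -> w 0 0 0 *: P 0 0 0 = e ->
  forall N, tsum N (fun a b c => w a b c *: P a b c) = s ^+ N *: e.
Proof.
move=> Phi_e base; elim=> [|N IH]; first by rewrite tsum0 expr0 scale1r.
by rewrite -tsum_transfer IH Phi_scale Phi_e scalerA -exprSr.
Qed.

End Transfer.

Lemma qcommXl (R : pzRingType) (A : algType R) (x y : A) (c : R) :
  x * y = c *: (y * x) -> forall n, x ^+ n * y = c ^+ n *: (y * x ^+ n).
Proof.
move=> xy; elim=> [|n IH]; first by rewrite !expr0 mul1r mulr1 scale1r.
rewrite exprS -mulrA IH -scalerAr [x * (y * _)]mulrA xy -scalerAl scalerA.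
by rewrite exprSr mulrA.
Qed.

Lemma qcommXr (R : pzRingType) (A : algType R) (x y : A) (c : R) :
  x * y = c *: (y * x) -> forall n, x * y ^+ n = c ^+ n *: (y ^+ n * x).
Proof.
move=> xy; elim=> [|n IH]; first by rewrite !expr0 mul1r mulr1 scale1r.
rewrite exprS mulrA xy -scalerAl -[y * x * _]mulrA IH -scalerAr scalerA.
by rewrite exprS mulrA.
Qed.

Lemma addr3ACA (V : zmodType) (a1 b1 a2 b2 a3 b3 : V) :
  (a1 + b1) + (a2 + b2) + (a3 + b3) = (a1 + a2 + a3) + (b1 + b2 + b3).
Proof. by rewrite [(a1 + b1) + _]addrACA (addrACA (a1 + a2) (b1 + b2) a3 b3). Qed.

Section S5q.
Variables (K : numClosedFieldType) (q : K) (A : algType K) (star : A -> A).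
Variables (z1 z2 z3 : A).
Hypotheses (q_gt0 : 0 < q) (q_neq1 : q != 1).
Hypotheses (hstar : is_star star) (hrel : S5q_relations q star z1 z2 z3).

Lemma starZ c x : star (c *: x) = Num.conj c *: star x. Proof. by case: hstar. Qed.
Lemma starM x y : star (x * y) = star y * star x. Proof. by case: hstar. Qed.
Lemma star1 : star 1 = 1. Proof. by case: hstar. Qed.

Lemma z12 : z1 * z2 = q *: (z2 * z1). Proof. by case: hrel => [[]]. Qed.
Lemma z13 : z1 * z3 = q *: (z3 * z1). Proof. by case: hrel => [[]]. Qed.
Lemma z23 : z2 * z3 = q *: (z3 * z2). Proof. by case: hrel => [[]]. Qed.

Lemma z1_normal : star z1 * z1 = z1 * star z1.
Proof. by case: hrel => _ _ _ [/eqP]; rewrite subr_eq0 => /eqP. Qed.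

Lemma z2_comm : star z2 * z2 = (1 - q ^+ 2) *: (z1 * star z1) + z2 * star z2.
Proof. by case: hrel => _ _ _ [_ /eqP]; rewrite subr_eq => /eqP. Qed.

Lemma z3_comm :
  star z3 * z3 = (1 - q ^+ 2) *: (z1 * star z1 + z2 * star z2) + z3 * star z3.
Proof. by case: hrel => _ _ _ [_ _ /eqP]; rewrite subr_eq => /eqP. Qed.

Lemma sphere_eq : z1 * star z1 + z2 * star z2 + z3 * star z3 = 1.
Proof. by case: hrel. Qed.

(* Positive scalars are self-adjoint, so they come out of x x^* and x^* x squared. *)
Lemma scale_norm_l (c : K) x : 0 < c -> (c *: x) * star (c *: x) = c ^+ 2 *: (x * star x).
Proof.
by move=> c_gt0; rewrite starZ conj_Creal ?gtr0_real // -scalerAr -scalerAl scalerA.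
Qed.

Lemma scale_norm_r (c : K) x : 0 < c -> star (c *: x) * (c *: x) = c ^+ 2 *: (star x * x).
Proof.
by move=> c_gt0; rewrite starZ conj_Creal ?gtr0_real // -scalerAr -scalerAl scalerA.
Qed.

Local Notation m := (mono z1 z2 z3).

Lemma qinv_gt0 n : 0 < q ^- n. Proof. by rewrite invr_gt0 exprn_gt0. Qed.

Lemma qinv_sqr n : (q ^- n) ^+ 2 = q ^- (2 * n).
Proof. by rewrite exprVn -exprM mulnC. Qed.

Lemma qX_neq0 n : q ^+ n != 0. Proof. by rewrite gt_eqF // exprn_gt0. Qed.

Lemma z1_mono j k l : z1 * m j k l = m j.+1 k l.
Proof. by rewrite /mono exprS !mulrA. Qed.

Lemma z2_mono j k l : z2 * m j k l = q ^- j *: m j k.+1 l.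
Proof.
apply: (canRL (scalerK (qX_neq0 j))); apply/esym.
by rewrite /mono exprS mulrA (qcommXl z12) -!scalerAl !mulrA.
Qed.

Lemma z3_mono j k l : z3 * m j k l = q ^- (j + k) *: m j k l.+1.
Proof.
apply: (canRL (scalerK (qX_neq0 _))); apply/esym.
rewrite /mono exprS mulrA -[z1 ^+ j * z2 ^+ k * z3]mulrA (qcommXl z23) -scalerAr.
rewrite -scalerAl [z1 ^+ j * (z3 * _)]mulrA (qcommXl z13) -!scalerAl scalerA -exprD addnC.
by rewrite !mulrA.
Qed.

Lemma mono_z1 j k l : m j k l * z1 = q ^- (k + l) *: m j.+1 k l.
Proof.
apply: (canRL (scalerK (qX_neq0 _))); apply/esym.
rewrite /mono exprSr -[z1 ^+ j * z1 * z2 ^+ k]mulrA (qcommXr z12) -scalerAr -scalerAl.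
rewrite -!mulrA (qcommXr z13) -!scalerAr scalerA -exprD.
by rewrite !mulrA.
Qed.

Lemma mono_z2 j k l : m j k l * z2 = q ^- l *: m j k.+1 l.
Proof.
apply: (canRL (scalerK (qX_neq0 _))); apply/esym.
by rewrite /mono exprSr -!mulrA (qcommXr z23) -!scalerAr !mulrA.
Qed.

Lemma mono_z3 j k l : m j k l * z3 = m j k l.+1.
Proof. by rewrite /mono exprSr !mulrA. Qed.

Lemma mono000 : m 0 0 0 = 1.
Proof. by rewrite /mono !expr0 !mulr1. Qed.

Definition Phi (x : A) : A := z1 * x * star z1 + z2 * x * star z2 + z3 * x * star z3.

Definition Psi (x : A) : A :=
  q ^+ 2 *: (star z1 * x * z1) + star z2 * x * z2 + q ^- 2 *: (star z3 * x * z3).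

Lemma Phi_add : {morph Phi : x y / x + y}.
Proof. by move=> x y; rewrite /Phi !mulrDr !mulrDl addr3ACA. Qed.

Lemma Phi_scale c x : Phi (c *: x) = c *: Phi x.
Proof. by rewrite /Phi !scalerDr -!scalerAr -!scalerAl. Qed.

Lemma Psi_add : {morph Psi : x y / x + y}.
Proof. by move=> x y; rewrite /Psi !mulrDr !mulrDl !scalerDr addr3ACA. Qed.

Lemma Psi_scale c x : Psi (c *: x) = c *: Psi x.
Proof.
rewrite /Psi !scalerDr -!scalerAr -!scalerAl !scalerA.
by rewrite (mulrC c) [q ^- 2 * c]mulrC.
Qed.

Lemma Phi1 : Phi 1 = 1.
Proof. by rewrite /Phi !mulr1 sphere_eq. Qed.

Lemma Psi1 : Psi 1 = q ^- 2 *: 1.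
Proof.
rewrite /Psi !mulr1 z1_normal z2_comm z3_comm -sphere_eq.
set x1 := z1 * star z1; set x2 := z2 * star z2; set x3 := z3 * star z3.
have q2_neq0 : q ^+ 2 != 0 by exact: qX_neq0.
rewrite scalerDr scalerA mulrBr mulr1 mulVf // !scalerBl !scale1r.
rewrite [q ^+ 2 *: x1 + _]addrA [q ^+ 2 *: x1 + _]addrC subrK [RHS]scalerDr.
by rewrite addrA [(x1 + x2) + (_ - _)]addrC subrK.
Qed.

Lemma Phi_norm j k l :
  Phi (m j k l * star (m j k l)) =
  1 *: (m j.+1 k l * star (m j.+1 k l))
  + q ^- (2 * j) *: (m j k.+1 l * star (m j k.+1 l))
  + q ^- (2 * (j + k)) *: (m j k l.+1 * star (m j k l.+1)).
Proof.
have sandwich x y : x * (y * star y) * star x = (x * y) * star (x * y).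
  by rewrite starM !mulrA.
rewrite /Phi !sandwich z1_mono z2_mono z3_mono !scale_norm_l ?qinv_gt0 //.
by rewrite !qinv_sqr scale1r.
Qed.

Lemma Psi_norm j k l :
  Psi (star (m j k l) * m j k l) =
  (q ^+ 2 * q ^- (2 * (k + l))) *: (star (m j.+1 k l) * m j.+1 k l)
  + q ^- (2 * l) *: (star (m j k.+1 l) * m j k.+1 l)
  + q ^- 2 *: (star (m j k l.+1) * m j k l.+1).
Proof.
have sandwich x y : star x * (star y * y) * x = star (y * x) * (y * x).
  by rewrite starM !mulrA.
rewrite /Psi !sandwich mono_z1 mono_z2 mono_z3 !scale_norm_r ?qinv_gt0 //.
by rewrite !qinv_sqr scalerA.
Qed.

Lemma sum_norm_left N :
  tsum N (fun a b c => qtrinom q a b c *: (m a b c * star (m a b c))) = 1.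
Proof.
have base : qtrinom q 0 0 0 *: (m 0 0 0 * star (m 0 0 0)) = 1.
  by rewrite qtrinom000 mono000 star1 mulr1 scale1r.
have Phi_unit : Phi 1 = 1 *: 1 by rewrite scale1r Phi1.
have weights := qtrinom_weights_left q_gt0 q_neq1.
rewrite (tsum_eigen Phi_add Phi_scale Phi_norm weights Phi_unit base).
by rewrite expr1n scale1r.
Qed.

Lemma sum_norm_right N :
  tsum N (fun a b c => (q ^+ (2 * a) * q ^- (2 * c) * qtrinom q a b c)
                         *: (star (m a b c) * m a b c))
  = q ^- (2 * N) *: 1.
Proof.
have base : (q ^+ (2 * 0) * q ^- (2 * 0) * qtrinom q 0 0 0)
              *: (star (m 0 0 0) * m 0 0 0) = 1.
  by rewrite qtrinom000 mono000 star1 mulr1 !expr0 invr1 !mulr1 scale1r.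
have weights := qtrinom_weights_right q_gt0 q_neq1.
rewrite (tsum_eigen Psi_add Psi_scale Psi_norm weights Psi1 base).
by rewrite exprVn -exprM.
Qed.

End S5q.

Theorem mainTheorem1 (K : numClosedFieldType) (q : K) (hq0 : 0 < q) (hq1 : q < 1)
    (A : algType K) (star : A -> A) (z1 z2 z3 : A)
    (hstar : is_star star) (hrel : S5q_relations q star z1 z2 z3) (N : nat) :
  \sum_(j < N.+1) \sum_(k < N.+1) \sum_(l < N.+1 | (j + k + l == N)%N)
      qtrinom q j k l *: (mono z1 z2 z3 j k l * star (mono z1 z2 z3 j k l)) = 1
  /\
  \sum_(j < N.+1) \sum_(k < N.+1) \sum_(l < N.+1 | (j + k + l == N)%N)
      (q ^+ (2 * j) * q ^- (2 * l) * qtrinom q j k l)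
        *: (star (mono z1 z2 z3 j k l) * mono z1 z2 z3 j k l)
    = (q ^- (2 * N)) *: 1.
Proof.
have q_neq1 : q != 1 by rewrite lt_eqF.
split; [exact: sum_norm_left | exact: sum_norm_right].
Qed.
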